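(* If two weighted hybrid graphs (with positive edge weights) have identical vertex sets and identical $L$-edge and $Q$-edge sets, then their hybrid Laplacians have identical kernels.
   Context: A weighted hybrid graph $G=(V,E_L+E_Q)$ has a set $E_L$ of $L$-edges and a set $E_Q$ of $Q$-edges, each edge with a positive weight. Its hybrid Laplacian is $\mathcal{L}(G)=L(S_l)+Q(S_q)$ with $S_l=(V,E_L)$, $S_q=(V,E_Q)$, where for a weighted graph $L=D-A$ and $Q=D+A$ with $A$ the weighted adjacency matrix and $D$ the diagonal matrix of weighted degrees. The edge weights of the two graphs may differ. *)

From mathcomp Require Import all_boot all_order all_algebra.
Set Implicit Arguments. Unset Strict Implicit. Unset Printing Implicit Defensive.
Import Order.TTheory GRing.Theory Num.Theory.
Local Open Scope ring_scope.

(* Vertices are 'I_n.  An edge set is a relation E : rel 'I_n (assumed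
   symmetric and irreflexive: a simple undirected graph); a weighting is
   w : 'I_n -> 'I_n -> R, only its values on edges matter. *)

Definition wadj (R : ringType) (n : nat) (E : rel 'I_n) (w : 'I_n -> 'I_n -> R)
  : 'M[R]_n := \matrix_(i, j) (if E i j then w i j else 0).

Definition wdeg (R : ringType) (n : nat) (E : rel 'I_n) (w : 'I_n -> 'I_n -> R)
  : 'M[R]_n := \matrix_(i, j) (if i == j then \sum_k wadj E w i k else 0).

Definition wlap (R : ringType) (n : nat) (E : rel 'I_n) (w : 'I_n -> 'I_n -> R)
  : 'M[R]_n := wdeg E w - wadj E w.
Definition wslap (R : ringType) (n : nat) (E : rel 'I_n) (w : 'I_n -> 'I_n -> R)
  : 'M[R]_n := wdeg E w + wadj E w.

Definition hybrid_lap (R : ringType) (n : nat) (EL EQ : rel 'I_n)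
  (wL wQ : 'I_n -> 'I_n -> R) : 'M[R]_n := wlap EL wL + wslap EQ wQ.

Definition simple_edges (n : nat) (E : rel 'I_n) : Prop :=
  (forall i j, E i j = E j i) /\ (forall i, ~~ E i i).

Definition pos_weight (R : numDomainType) (n : nat) (E : rel 'I_n)
  (w : 'I_n -> 'I_n -> R) : Prop :=
  forall i j, E i j -> 0 < w i j /\ w i j = w j i.

From mathcomp Require Import all_boot all_order all_algebra.
From mathcomp Require Import ring.
Import Order.TTheory GRing.Theory Num.Theory.
Set Implicit Arguments. Unset Strict Implicit. Unset Printing Implicit Defensive.
Local Open Scope ring_scope.

(* The kernel of a hybrid Laplacian does not see the weights: writing
   a = A(S_l) and b = A(S_q), one has
     sum_{i,k} a_ik (x_i - x_k)^2 + b_ik (x_i + x_k)^2 = 2 x^T (L(S_l) + Q(S_q)) x,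
   so for positive weights x lies in the kernel exactly when x_i = x_k on every
   L-edge and x_i = -x_k on every Q-edge, a condition on the edge sets alone. *)

Definition edge_consistent (R : zmodType) (n : nat) (EL EQ : rel 'I_n)
  (u : 'I_n -> R) : Prop :=
  (forall i k, EL i k -> u i = u k) /\ (forall i k, EQ i k -> u i = - u k).

Section HybridLaplacianProduct.
Variables (R : comNzRingType) (n : nat).

Lemma mulmx_wdeg (E : rel 'I_n) (w : 'I_n -> 'I_n -> R) (m : nat)
  (x : 'M[R]_(n, m)) :
  wdeg E w *m x = \matrix_(i, j) \sum_k wadj E w i k * x i j.
Proof.
apply/matrixP => i j; rewrite !mxE -mulr_suml (bigD1 i) //= big1 => [|l /negPf ne_li].
  by rewrite !mxE eqxx addr0.
by rewrite mxE eq_sym ne_li mul0r.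
Qed.

Lemma mulmx_hybrid_lap (EL EQ : rel 'I_n) (wL wQ : 'I_n -> 'I_n -> R)
  (m : nat) (x : 'M[R]_(n, m)) i j :
  (hybrid_lap EL EQ wL wQ *m x) i j =
  \sum_k (wadj EL wL i k * (x i j - x k j) + wadj EQ wQ i k * (x i j + x k j)).
Proof.
rewrite /hybrid_lap /wlap /wslap mulmxDl mulmxBl mulmxDl !mulmx_wdeg !mxE.
rewrite -sumrB -!big_split /=; apply: eq_bigr => k _; rewrite !mxE; ring.
Qed.

Lemma wadj_mul_eq0 (E : rel 'I_n) (w : 'I_n -> 'I_n -> R) i k (y : R) :
  (E i k -> y = 0) -> wadj E w i k * y = 0.
Proof. by rewrite mxE; case: ifP => [_ -> // | _ _]; rewrite ?mulr0 ?mul0r. Qed.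

Lemma hybrid_energyE (a b : 'I_n -> 'I_n -> R) (u : 'I_n -> R) :
  (forall i k, a i k = a k i) -> (forall i k, b i k = b k i) ->
  \sum_i \sum_k (a i k * (u i - u k) ^+ 2 + b i k * (u i + u k) ^+ 2) =
  (\sum_i u i * \sum_k (a i k * (u i - u k) + b i k * (u i + u k))) *+ 2.
Proof.
move=> asym bsym.
have swap_sum : \sum_i u i * \sum_k (a i k * (u i - u k) + b i k * (u i + u k)) =
    \sum_i \sum_k u k * (a i k * (u k - u i) + b i k * (u k + u i)).
  rewrite exchange_big; apply: eq_bigr => i _; rewrite mulr_sumr.
  by apply: eq_bigr => k _; rewrite asym bsym.
rewrite mulr2n {2}swap_sum -big_split; apply: eq_bigr => i _.
rewrite mulr_sumr -big_split; apply: eq_bigr => k _ /=; ring.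
Qed.

End HybridLaplacianProduct.

Section PositiveWeights.
Variables (R : realDomainType) (n : nat) (E : rel 'I_n) (w : 'I_n -> 'I_n -> R).
Hypothesis w_pos : pos_weight E w.

Lemma wadj_ge0 i k : 0 <= wadj E w i k.
Proof. by rewrite mxE; case: ifP => // /w_pos [/ltW]. Qed.

Lemma wadj_sym : (forall i k, E i k = E k i) -> forall i k, wadj E w i k = wadj E w k i.
Proof.
move=> E_sym i k; rewrite !mxE E_sym.
by case: ifP => // /w_pos [_ ->].
Qed.

Lemma wadj_mul_sqr_eq0 i k (y : R) :
  E i k -> wadj E w i k * y ^+ 2 = 0 -> y = 0.
Proof.
move=> Eik /eqP; rewrite mxE Eik mulf_eq0 sqrf_eq0 (gt_eqF (w_pos Eik).1) /=.
by move/eqP.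
Qed.

End PositiveWeights.

Section HybridLaplacianKernel.
Variables (R : realDomainType) (n : nat) (EL EQ : rel 'I_n).
Variables (wL wQ : 'I_n -> 'I_n -> R).
Hypotheses (EL_simple : simple_edges EL) (EQ_simple : simple_edges EQ).
Hypotheses (wL_pos : pos_weight EL wL) (wQ_pos : pos_weight EQ wQ).

Lemma hybrid_lap_kerP (x : 'cV[R]_n) :
  hybrid_lap EL EQ wL wQ *m x = 0 <-> edge_consistent EL EQ (fun i => x i 0).
Proof.
set a := wadj EL wL; set b := wadj EQ wQ.
pose F i k := a i k * (x i 0 - x k 0) ^+ 2 + b i k * (x i 0 + x k 0) ^+ 2.
have aF_ge0 i k : 0 <= a i k * (x i 0 - x k 0) ^+ 2.
  by rewrite mulr_ge0 ?sqr_ge0 ?wadj_ge0.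
have bF_ge0 i k : 0 <= b i k * (x i 0 + x k 0) ^+ 2.
  by rewrite mulr_ge0 ?sqr_ge0 ?wadj_ge0.
split=> [Lx0 | [xL xQ]].
- have energy0 : \sum_p F p.1 p.2 = 0.
    have a_sym : forall i k, a i k = a k i by apply: wadj_sym; case: EL_simple.
    have b_sym : forall i k, b i k = b k i by apply: wadj_sym; case: EQ_simple.
    rewrite -pair_bigA (hybrid_energyE _ a_sym b_sym).
    rewrite big1 ?mul0rn // => i _.
    by rewrite -mulmx_hybrid_lap Lx0 mxE mulr0.
  have F0 i k : F i k = 0.
    have F_ge0 (p : 'I_n * 'I_n) : true -> 0 <= F p.1 p.2 by rewrite addr_ge0.
    exact: (@psumr_eq0P _ _ _ _ F_ge0 energy0 (i, k)).
  split=> i k Eik.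
  + apply/subr0_eq/(wadj_mul_sqr_eq0 wL_pos Eik).
    by have /eqP := F0 i k; rewrite paddr_eq0 // => /andP [/eqP].
  + apply/eqP; rewrite -addr_eq0; apply/eqP/(wadj_mul_sqr_eq0 wQ_pos Eik).
    by have /eqP := F0 i k; rewrite paddr_eq0 // => /andP [_ /eqP].
- apply/matrixP => i j; rewrite ord1 mulmx_hybrid_lap mxE; apply: big1 => k _.
  by rewrite !wadj_mul_eq0 ?addr0 // => [/xQ | /xL] ->; rewrite ?addNr ?subrr.
Qed.

End HybridLaplacianKernel.

Theorem lemma2 (R : realFieldType) (n : nat) (EL EQ : rel 'I_n)
  (wL1 wQ1 wL2 wQ2 : 'I_n -> 'I_n -> R) :
  simple_edges EL -> simple_edges EQ ->
  pos_weight EL wL1 -> pos_weight EQ wQ1 ->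
  pos_weight EL wL2 -> pos_weight EQ wQ2 ->
  forall x : 'cV[R]_n,
    hybrid_lap EL EQ wL1 wQ1 *m x = 0 <-> hybrid_lap EL EQ wL2 wQ2 *m x = 0.
Proof.
move=> EL_simple EQ_simple wL1_pos wQ1_pos wL2_pos wQ2_pos x.
by rewrite (hybrid_lap_kerP EL_simple EQ_simple wL1_pos wQ1_pos)
           (hybrid_lap_kerP EL_simple EQ_simple wL2_pos wQ2_pos).
Qed.
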